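(* Let $\mathbf{M}=\mathrm{diag}(\lambda_1,\dots,\lambda_N)$ with $\lambda_1>\lambda_2>\cdots>\lambda_r>\lambda_{r+1}\ge\cdots\ge\lambda_N\ge0$, and let $d_{\min}=\min_{1\le s<j\le r+1}(\lambda_s-\lambda_j)$. Let $\epsilon>0$ and $\mathbf{X}=[\bm{x}_1,\dots,\bm{x}_r]\in\mathrm{St}(N,r)$ with $\|\mathrm{grad}\,g(\mathbf{X})\|_F\le\epsilon$. For each $j\in[r]$ let $i_j\in[N]$ be an index minimizing $|\bm{x}_j^\top\mathbf{M}\bm{x}_j-\lambda_n|$ over $n\in[N]$, and set $\boldsymbol{\Lambda}_\Omega=\mathrm{diag}(\lambda_{i_1},\dots,\lambda_{i_r})$, $\mathbf{X}_\Omega=[\bm{e}_{i_1},\dots,\bm{e}_{i_r}]$. Then (i) $\|\mathbf{X}^\top\mathbf{M}\mathbf{X}-\boldsymbol{\Lambda}_\Omega\|_F\le4\epsilon$; (ii) if $(i_1,\dots,i_r)=(1,\dots,r)$, then there exist signs $s_1,\dots,s_r\in\{\pm1\}$ such that $\|\mathbf{X}-\mathbf{X}_\Omega\,\mathrm{diag}(s_1,\dots,s_r)\|_F\le 12\,d_{\min}^{-1}\epsilon$ (with $s_j=1$ whenever $\mathbf{X}(j,j)\ge0$).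
   Context: $\bm{e}_i$ is the $i$-th standard basis vector of $\mathbb{R}^N$. $\mathrm{St}(N,r)=\{\mathbf{X}\in\mathbb{R}^{N\times r}:\mathbf{X}^\top\mathbf{X}=\mathbf{I}_r\}$, $\mathbf{N}=\mathrm{diag}(r,r-1,\dots,1)$, $g(\mathbf{X})=-\tfrac12\mathrm{tr}(\mathbf{X}^\top\mathbf{M}\mathbf{X}\mathbf{N})$, with Riemannian gradient $\mathrm{grad}\,g(\mathbf{X})=(\mathbf{X}\mathbf{X}^\top-\mathbf{I}_N)\mathbf{M}\mathbf{X}\mathbf{N}-\tfrac12\mathbf{X}[\mathbf{X}^\top\mathbf{M}\mathbf{X},\mathbf{N}]$, where $[\mathbf{A},\mathbf{B}]=\mathbf{A}\mathbf{B}-\mathbf{B}\mathbf{A}$. *)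

From HB Require Import structures.
From mathcomp Require Import all_boot all_order all_algebra.
Set Implicit Arguments. Unset Strict Implicit. Unset Printing Implicit Defensive.
Import Order.TTheory GRing.Theory Num.Theory.
Local Open Scope ring_scope.

Definition frob (R : rcfType) (m n : nat) (A : 'M[R]_(m, n)) : R :=
  Num.sqrt (\sum_(i < m) \sum_(j < n) A i j ^+ 2).

Definition commx (R : rcfType) (n : nat) (A B : 'M[R]_n) : 'M[R]_n :=
  A *m B - B *m A.

(* M = diag(lam_1..lam_N), stored 0-based: entry i is lam i *)
Definition Mdiag (R : rcfType) (N : nat) (lam : nat -> R) : 'M[R]_N :=
  diag_mx (\row_(i < N) lam i).

(* N = diag(r, r-1, ..., 1) (0-based entry j is r - j) *)
Definition Nweight (R : rcfType) (r : nat) : 'M[R]_r :=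
  diag_mx (\row_(j < r) (r - j)%:R).

(* Riemannian gradient of g(X) = -1/2 tr(X^T M X N) on St(N,r) *)
Definition gradg (R : rcfType) (N r : nat) (M : 'M[R]_N) (X : 'M[R]_(N, r))
  : 'M[R]_(N, r) :=
  (X *m X^T - 1%:M) *m M *m X *m Nweight R r
  - (2%:R)^-1 *: (X *m commx (X^T *m M *m X) (Nweight R r)).

(* d_min = min_{1 <= s < j <= r+1} (lam_s - lam_j), 0-based: 0 <= s < j <= r.
   The seed (lam 0 - lam r) is itself one of the terms (r >= 1). *)
Definition dmin (R : rcfType) (lam : nat -> R) (r : nat) : R :=
  \big[Num.min/(lam 0%N - lam r)]_(0 <= s < r.+1)
     \big[Num.min/(lam 0%N - lam r)]_(s.+1 <= j < r.+1) (lam s - lam j).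

Definition XOmega (R : rcfType) (N r : nat) (idx : 'I_r -> 'I_N) : 'M[R]_(N, r) :=
  \matrix_(i < N, j < r) (i == idx j)%:R.

Definition LamOmega (R : rcfType) (N r : nat) (lam : nat -> R) (idx : 'I_r -> 'I_N)
  : 'M[R]_r := diag_mx (\row_(j < r) lam (idx j)).

From HB Require Import structures.
From mathcomp Require Import all_boot all_order all_algebra.
From mathcomp Require Import ring lra.
Import Order.TTheory GRing.Theory Num.Theory.
Set Implicit Arguments. Unset Strict Implicit. Unset Printing Implicit Defensive.
Local Open Scope ring_scope.

(* Write A = X^T M X, W = M X - X A and C = [A, N].  Since X^T W = 0, the
   gradient splits orthogonally as -W N + X (-C/2), so by Pythagoras
   ||W N||^2 + ||C||^2 / 4 <= eps^2.  The weights of N are at least 1 and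
   C_ij = A_ij (i - j), hence ||W|| <= ||W N|| and ||offdiag A|| <= ||C||;
   thus ||W||^2 + ||offdiag A||^2 <= 4 eps^2.  The Ritz residual
   E = M X - X diag(A) equals W + X offdiag(A), so ||E||^2 has the same bound.
   For M = diag(lam), column j of E is ((lam_n - a_jj) x_nj)_n; as x_j is a
   unit vector, (a_jj - lam_{i_j})^2 <= ||E e_j||^2, which gives part (i).
   For part (ii), every lam_n with n <> j is d_min away from lam_j, hence
   d_min/2 away from a_jj, so d_min^2 (1 - x_jj^2) <= 4 ||E e_j||^2, while
   the signed coordinate vector is within squared distance 2 (1 - x_jj^2)
   of x_j. *)

Section RealFacts.
Variable R : realDomainType.

Lemma sqr_le_mulr (a c : R) : 1 <= `|c| -> a ^+ 2 <= (a * c) ^+ 2.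
Proof.
move=> hc; rewrite exprMn -[c ^+ 2]real_normK ?num_real //.
by rewrite ler_peMr ?sqr_ge0 // expr_ge1.
Qed.

Lemma sqr_le_norm (a b : R) : `|a| <= `|b| -> a ^+ 2 <= b ^+ 2.
Proof.
move=> h; rewrite -[a ^+ 2]real_normK ?num_real // -[b ^+ 2]real_normK ?num_real //.
by rewrite ler_sqr ?nnegrE ?normr_ge0.
Qed.

Lemma nat_dist_ge1 (i j : nat) : i != j -> 1 <= `|i%:R - j%:R : R|.
Proof.
case: (ltngtP i j) => // [hij|hji] _.
- by rewrite distrC -(natrB _ (ltnW hij)) ger0_norm ?ler0n // ler1n subn_gt0.
- by rewrite -(natrB _ (ltnW hji)) ger0_norm ?ler0n // ler1n subn_gt0.
Qed.

Definition pmsign (a : R) : R := if 0 <= a then 1 else -1.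

(* For a^2 + t = 1, the sign of a is within squared distance t of a:
   (1 - |a|)^2 <= (1 - |a|)(1 + |a|) = t. *)
Lemma sqr_sub_pmsign (a t : R) : 0 <= t -> a ^+ 2 + t = 1 ->
  (a - pmsign a) ^+ 2 <= t.
Proof. by rewrite /pmsign => ht h; case: (lerP 0 a) => ha; rewrite ?opprK; nra. Qed.

Lemma nearest_gap (a b c d : R) :
  0 <= d -> `|a - b| <= `|a - c| -> d <= `|b - c| ->
  d ^+ 2 <= 4%:R * (c - a) ^+ 2.
Proof.
move=> hd hb hc.
have h2 : d <= 2%:R * `|c - a|.
  apply: (le_trans hc); apply: (le_trans (ler_distD a b c)).
  by rewrite distrC [`|c - a|]distrC; lra.
rewrite -[(c - a) ^+ 2]real_normK ?num_real //.
have := normr_ge0 (c - a); nra.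
Qed.

End RealFacts.

Lemma sqr_le_div (F : realFieldType) (S d k e : F) :
  0 < d -> d ^+ 2 * S <= (k * e) ^+ 2 -> S <= (k * d^-1 * e) ^+ 2.
Proof.
move=> hd h; rewrite -(ler_pM2l (exprn_gt0 2 hd)).
suff -> : d ^+ 2 * (k * d^-1 * e) ^+ 2 = (k * e) ^+ 2 by [].
by field; rewrite gt_eqF.
Qed.

Section Frobenius.
Variable R : rcfType.

Definition colnorm2 m n (P : 'M[R]_(m, n)) (j : 'I_n) : R := (P^T *m P) j j.

Definition frob2 m n (P : 'M[R]_(m, n)) : R := \sum_j colnorm2 P j.

Lemma colnorm2E m n (P : 'M[R]_(m, n)) j : colnorm2 P j = \sum_i P i j ^+ 2.
Proof. by rewrite /colnorm2 !mxE; apply: eq_bigr => i _; rewrite mxE expr2. Qed.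

Lemma colnorm2_ge0 m n (P : 'M[R]_(m, n)) j : 0 <= colnorm2 P j.
Proof. by rewrite colnorm2E sumr_ge0 // => i _; rewrite sqr_ge0. Qed.

Lemma frob2_ge0 m n (P : 'M[R]_(m, n)) : 0 <= frob2 P.
Proof. by rewrite sumr_ge0 // => j _; rewrite colnorm2_ge0. Qed.

Lemma frobE m n (P : 'M[R]_(m, n)) : frob P = Num.sqrt (frob2 P).
Proof.
rewrite /frob /frob2 exchange_big; congr Num.sqrt; apply: eq_bigr => j _.
by rewrite colnorm2E.
Qed.

Lemma frob_le_frob2 m n (P : 'M[R]_(m, n)) c :
  0 <= c -> frob2 P <= c ^+ 2 -> frob P <= c.
Proof.
move=> hc h; rewrite frobE -(ger0_norm hc) -sqrtr_sqr ler_sqrt //.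
exact: sqr_ge0.
Qed.

Lemma frob2_le_frob m n (P : 'M[R]_(m, n)) c : frob P <= c -> frob2 P <= c ^+ 2.
Proof.
move=> h; have hc : 0 <= c by apply: le_trans h; rewrite frobE sqrtr_ge0.
by rewrite -(sqr_sqrtr (frob2_ge0 P)) ler_sqr ?nnegrE ?sqrtr_ge0 // -frobE.
Qed.

Lemma gram_orth m n k (X : 'M[R]_(m, k)) (P : 'M[R]_(m, n)) (Q : 'M[R]_(k, n)) :
  X^T *m X = 1%:M -> X^T *m P = 0 ->
  (P + X *m Q)^T *m (P + X *m Q) = P^T *m P + Q^T *m Q.
Proof.
move=> hX hP.
have hPX : P^T *m X = 0 by rewrite -[P^T *m X]trmxK trmx_mul trmxK hP trmx0.
rewrite [(P + _)^T]linearD /= trmx_mul mulmxDl !mulmxDr !mulmxA hPX mul0mx addr0.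
by rewrite -(mulmxA Q^T) hP mulmx0 add0r -(mulmxA Q^T) hX mulmx1.
Qed.

Lemma frob2_orth m n k (X : 'M[R]_(m, k)) (P : 'M[R]_(m, n)) (Q : 'M[R]_(k, n)) :
  X^T *m X = 1%:M -> X^T *m P = 0 -> frob2 (P + X *m Q) = frob2 P + frob2 Q.
Proof.
move=> hX hP; rewrite /frob2 -big_split; apply: eq_bigr => j _.
by rewrite /colnorm2 gram_orth // mxE.
Qed.

Lemma frob2N m n (P : 'M[R]_(m, n)) : frob2 (- P) = frob2 P.
Proof.
apply: eq_bigr => j _; rewrite !colnorm2E.
by apply: eq_bigr => i _; rewrite mxE sqrrN.
Qed.

Lemma frob2Z m n (a : R) (P : 'M[R]_(m, n)) : frob2 (a *: P) = a ^+ 2 * frob2 P.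
Proof.
rewrite /frob2 mulr_sumr; apply: eq_bigr => j _; rewrite !colnorm2E mulr_sumr.
by apply: eq_bigr => i _; rewrite mxE exprMn.
Qed.

Lemma frob2_le_entrywise m n (P Q : 'M[R]_(m, n)) :
  (forall i j, P i j ^+ 2 <= Q i j ^+ 2) -> frob2 P <= frob2 Q.
Proof.
move=> hPQ; apply: ler_sum => j _; rewrite !colnorm2E.
by apply: ler_sum => i _; apply: hPQ.
Qed.

End Frobenius.

Section WeightMatrix.
Variable R : rcfType.

Lemma mulmx_NweightE m r (P : 'M[R]_(m, r)) i j :
  (P *m Nweight R r) i j = P i j * (r - j)%:R.
Proof. by rewrite mul_mx_diag !mxE. Qed.

Lemma commx_NweightE r (A : 'M[R]_r) i j :
  commx A (Nweight R r) i j = A i j * (i%:R - j%:R).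
Proof.
rewrite /commx mul_mx_diag mul_diag_mx !mxE.
rewrite (natrB _ (ltnW (ltn_ord j))) (natrB _ (ltnW (ltn_ord i))); ring.
Qed.

(* Since every weight r - j is at least one, N does not shrink any matrix. *)
Lemma frob2_le_mulmx_Nweight m r (P : 'M[R]_(m, r)) :
  frob2 P <= frob2 (P *m Nweight R r).
Proof.
apply: frob2_le_entrywise => i j; rewrite mulmx_NweightE; apply: sqr_le_mulr.
by rewrite ger0_norm ?ler0n // ler1n subn_gt0.
Qed.

End WeightMatrix.

Section OffDiagonal.
Variable R : rcfType.

Definition diagpart n (A : 'M[R]_n) : 'M[R]_n := diag_mx (\row_j A j j).
Definition offdiag n (A : 'M[R]_n) : 'M[R]_n := A - diagpart A.

Lemma offdiagE n (A : 'M[R]_n) i j :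
  offdiag A i j = if i == j then 0 else A i j.
Proof.
rewrite /offdiag /diagpart !mxE.
by case: eqP => [->|_]; rewrite ?mulr1n ?subrr ?mulr0n ?subr0.
Qed.

Lemma frob2_offdiag_le_commx r (A : 'M[R]_r) :
  frob2 (offdiag A) <= frob2 (commx A (Nweight R r)).
Proof.
apply: frob2_le_entrywise => i j; rewrite offdiagE commx_NweightE.
case: eqP => [_|/eqP hij]; first by rewrite expr0n sqr_ge0.
by apply: sqr_le_mulr; apply: nat_dist_ge1; rewrite (inj_eq val_inj).
Qed.

Lemma frob2_sub_diag n (A : 'M[R]_n) (d : 'rV[R]_n) :
  frob2 (A - diag_mx d) = \sum_j (A j j - d 0 j) ^+ 2 + frob2 (offdiag A).
Proof.
rewrite /frob2 -big_split; apply: eq_bigr => j _ /=.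
rewrite !colnorm2E (bigD1 j) //= [in RHS](bigD1 j) //= offdiagE eqxx expr0n add0r.
rewrite !mxE eqxx mulr1n; congr (_ + _); apply: eq_bigr => i hij.
by rewrite offdiagE !mxE (negbTE hij) mulr0n subr0.
Qed.

End OffDiagonal.

Section StiefelGradient.
Variables (R : rcfType) (N r : nat) (M : 'M[R]_N) (X : 'M[R]_(N, r)).
Hypothesis hSt : X^T *m X = 1%:M.

Definition rayleigh : 'M[R]_r := X^T *m M *m X.

Definition resid : 'M[R]_(N, r) := M *m X - X *m rayleigh.

Definition ritz_resid : 'M[R]_(N, r) := M *m X - X *m diagpart rayleigh.

Lemma resid_orth : X^T *m resid = 0.
Proof. by rewrite /resid mulmxBr !mulmxA hSt mul1mx subrr. Qed.

Lemma gradg_decomp :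
  gradg M X = - (resid *m Nweight R r)
              + X *m (- 2%:R^-1 *: commx rayleigh (Nweight R r)).
Proof.
rewrite /gradg -scalemxAr scaleNr; congr (_ - _).
by rewrite -mulNmx /resid /rayleigh opprB !mulmxBl mul1mx !mulmxA.
Qed.

Lemma frob2_gradg :
  frob2 (gradg M X) = frob2 (resid *m Nweight R r)
                      + frob2 (commx rayleigh (Nweight R r)) / 4%:R.
Proof.
have horth : X^T *m - (resid *m Nweight R r) = 0.
  by rewrite mulmxN mulmxA resid_orth mul0mx oppr0.
rewrite gradg_decomp frob2_orth // frob2N frob2Z sqrrN exprVn -natrX.
by rewrite mulrC.
Qed.

Lemma frob2_ritz_resid :
  frob2 ritz_resid = frob2 resid + frob2 (offdiag rayleigh).
Proof.
have -> : ritz_resid = resid + X *m offdiag rayleigh.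
  by rewrite /ritz_resid /resid /offdiag mulmxBr addrA subrK.
exact: frob2_orth resid_orth.
Qed.

Lemma frob2_resid_offdiag_le :
  frob2 resid + frob2 (offdiag rayleigh) <= 4%:R * frob2 (gradg M X).
Proof.
rewrite frob2_gradg.
have := frob2_le_mulmx_Nweight resid.
have := frob2_offdiag_le_commx rayleigh.
have := frob2_ge0 (resid *m Nweight R r).
lra.
Qed.

End StiefelGradient.

Section UnitColumns.
Variables (R : rcfType) (N r : nat) (X : 'M[R]_(N, r)).
Hypothesis hSt : X^T *m X = 1%:M.

Lemma colnorm2_unit j : colnorm2 X j = 1.
Proof. by rewrite /colnorm2 hSt mxE eqxx. Qed.

Definition offmass (j : 'I_r) (c : 'I_N) : R := \sum_(n < N | n != c) X n j ^+ 2.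

Lemma offmass_ge0 j c : 0 <= offmass j c.
Proof. by apply: sumr_ge0 => n _; apply: sqr_ge0. Qed.

Lemma unit_col_split j c : X c j ^+ 2 + offmass j c = 1.
Proof. by rewrite -(colnorm2_unit j) colnorm2E [RHS](bigD1 c). Qed.

Lemma colnorm2_signed_selection (idx : 'I_r -> 'I_N) j :
  colnorm2 (X - XOmega R idx *m diag_mx (\row_k pmsign (X (idx k) k))) j
    <= 2%:R * offmass j (idx j).
Proof.
have hB n : (X - XOmega R idx *m diag_mx (\row_k pmsign (X (idx k) k))) n j
            = X n j - (n == idx j)%:R * pmsign (X (idx j) j).
  by rewrite mul_mx_diag !mxE.
rewrite colnorm2E (bigD1 (idx j)) //= hB eqxx mul1r.
have -> : \sum_(n < N | n != idx j) (X - XOmega R idx *m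
            diag_mx (\row_k pmsign (X (idx k) k))) n j ^+ 2 = offmass j (idx j).
  by apply: eq_bigr => n hn; rewrite hB (negbTE hn) mul0r subr0.
have := sqr_sub_pmsign (offmass_ge0 j (idx j)) (unit_col_split j (idx j)).
lra.
Qed.

End UnitColumns.

Section EigenGap.
Variables (R : rcfType) (N r : nat) (lam : nat -> R).
Hypothesis hr1 : (1 <= r)%N.
Hypothesis hdec : forall i j : nat, (i < j)%N -> (j < N)%N -> lam j <= lam i.
Hypothesis hstrict : forall i j : nat, (i < j)%N -> (j <= r)%N -> lam j < lam i.

Lemma dmin_gt0 : 0 < dmin lam r.
Proof.
have h0r : 0 < lam 0%N - lam r by rewrite subr_gt0 hstrict.
rewrite /dmin; apply: lt_bigmin => // s _; rewrite big_nat_cond.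
apply: lt_bigmin => // t /andP[/andP[hst htr] _].
by rewrite subr_gt0 hstrict.
Qed.

Lemma dmin_le s t : (s < t)%N -> (t <= r)%N -> dmin lam r <= lam s - lam t.
Proof.
move=> hst htr; rewrite /dmin; apply: (bigmin_inf_seq _ s) => //.
  by rewrite mem_index_iota /= ltnS (leq_trans (ltnW hst) htr).
by apply: (bigmin_inf_seq _ t) => //; rewrite mem_index_iota hst ltnS htr.
Qed.

(* Each of the top r eigenvalues is at distance at least d_min from every
   other eigenvalue (below lam_r, the gap lam_j - lam_r already suffices). *)
Lemma dmin_le_dist (j n : nat) : (j < r)%N -> (n < N)%N -> n != j ->
  dmin lam r <= `|lam j - lam n|.
Proof.
move=> hjr hnN hnj.
case: (ltngtP n j) hnj => // [hnjlt|hjn] _.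
  by rewrite distrC; apply: le_trans (ler_norm _); apply: dmin_le => //; exact: ltnW.
apply: le_trans (ler_norm _).
case: (leqP n r) => hnr; first exact: dmin_le.
apply: le_trans (dmin_le hjr (leqnn r)) _.
by rewrite lerD2l lerN2; apply: hdec.
Qed.

End EigenGap.

Section DiagonalMatrix.
Variables (R : rcfType) (N r : nat) (lam : nat -> R) (X : 'M[R]_(N, r)).
Hypothesis hSt : X^T *m X = 1%:M.

Local Notation A := (rayleigh (Mdiag N lam) X).
Local Notation E := (ritz_resid (Mdiag N lam) X).

Lemma ritz_resid_MdiagE n j : E n j = (lam n - A j j) * X n j.
Proof. rewrite /ritz_resid /diagpart mul_diag_mx mul_mx_diag !mxE; ring. Qed.

(* Since x_j is a unit vector, the squared Ritz residual of column j is a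
   weighted average of the (lam_n - a_jj)^2, hence at least their minimum. *)
Lemma nearest_le_colnorm2 j (c : 'I_N) :
  (forall n : 'I_N, `|A j j - lam c| <= `|A j j - lam n|) ->
  (A j j - lam c) ^+ 2 <= colnorm2 E j.
Proof.
move=> hc; rewrite -[_ ^+ 2]mulr1 -(colnorm2_unit hSt j) !colnorm2E mulr_sumr.
apply: ler_sum => n _; rewrite ritz_resid_MdiagE exprMn.
rewrite ler_wpM2r ?sqr_ge0 //; apply: sqr_le_norm.
by rewrite [leRHS]distrC hc.
Qed.

Lemma frob2_rayleigh_sub_LamOmega (idx : 'I_r -> 'I_N) :
  (forall (j : 'I_r) (n : 'I_N),
     `|A j j - lam (idx j)| <= `|A j j - lam n|) ->
  frob2 (A - LamOmega lam idx) <= 8%:R * frob2 (gradg (Mdiag N lam) X).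
Proof.
move=> hidx; rewrite /LamOmega frob2_sub_diag.
have hdiag : \sum_j (A j j - (\row_j lam (idx j)) 0 j) ^+ 2 <= frob2 E.
  by apply: ler_sum => j _; rewrite mxE; apply: nearest_le_colnorm2.
have := frob2_resid_offdiag_le (Mdiag N lam) hSt.
have := frob2_ritz_resid (Mdiag N lam) hSt.
have := frob2_ge0 (resid (Mdiag N lam) X).
lra.
Qed.

Lemma offmass_le_colnorm2 j (c : 'I_N) (d : R) :
  0 <= d ->
  (forall n : 'I_N, `|A j j - lam c| <= `|A j j - lam n|) ->
  (forall n : 'I_N, n != c -> d <= `|lam c - lam n|) ->
  d ^+ 2 * offmass X j c <= 4%:R * colnorm2 E j.
Proof.
move=> hd hc hgap.
apply: le_trans (_ : 4%:R * \sum_(n < N | n != c) E n j ^+ 2 <= _).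
  rewrite /offmass !mulr_sumr; apply: ler_sum => n hn.
  rewrite ritz_resid_MdiagE exprMn [leRHS]mulrA ler_wpM2r ?sqr_ge0 //.
  exact: nearest_gap hd (hc n) (hgap n hn).
rewrite ler_pM2l ?ltr0n // colnorm2E [leRHS](bigD1 c) //= lerDr.
exact: sqr_ge0.
Qed.

Lemma frob2_signed_selection_le (idx : 'I_r -> 'I_N) (d : R) :
  0 <= d ->
  (forall (j : 'I_r) (n : 'I_N), `|A j j - lam (idx j)| <= `|A j j - lam n|) ->
  (forall (j : 'I_r) (n : 'I_N), n != idx j -> d <= `|lam (idx j) - lam n|) ->
  d ^+ 2 * frob2 (X - XOmega R idx *m diag_mx (\row_k pmsign (X (idx k) k)))
    <= 32%:R * frob2 (gradg (Mdiag N lam) X).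
Proof.
move=> hd hidx hgap.
have hcols : d ^+ 2 * frob2 (X - XOmega R idx *m
               diag_mx (\row_k pmsign (X (idx k) k))) <= 8%:R * frob2 E.
  rewrite /frob2 !mulr_sumr; apply: ler_sum => j _.
  apply: le_trans (ler_wpM2l (sqr_ge0 d) (colnorm2_signed_selection hSt idx j)) _.
  have := offmass_le_colnorm2 hd (hidx j) (hgap j).
  rewrite mulrCA; lra.
have := frob2_resid_offdiag_le (Mdiag N lam) hSt.
have := frob2_ritz_resid (Mdiag N lam) hSt.
have := frob2_ge0 (offdiag A).
lra.
Qed.

End DiagonalMatrix.

Unset Implicit Arguments.

Theorem lemmaC1 (R : rcfType) (N r : nat) (lam : nat -> R)
  (hr1 : (1 <= r)%N) (hrN : (r < N)%N)
  (hdec : forall i j : nat, (i < j)%N -> (j < N)%N -> lam j <= lam i)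
  (hstrict : forall i j : nat, (i < j)%N -> (j <= r)%N -> lam j < lam i)
  (hnneg : forall i : nat, (i < N)%N -> 0 <= lam i)
  (eps : R) (heps : 0 < eps)
  (X : 'M[R]_(N, r)) (hSt : X^T *m X = 1%:M)
  (hgrad : frob (gradg (Mdiag N lam) X) <= eps)
  (idx : 'I_r -> 'I_N)
  (hidx : forall (j : 'I_r) (n : 'I_N),
     `|(X^T *m Mdiag N lam *m X) j j - lam (idx j)|
       <= `|(X^T *m Mdiag N lam *m X) j j - lam n|) :
  frob (X^T *m Mdiag N lam *m X - LamOmega lam idx) <= 4%:R * eps
  /\ ((forall j : 'I_r, nat_of_ord (idx j) = nat_of_ord j) ->
      exists s : 'I_r -> R,
        (forall j, s j = 1 \/ s j = -1)
        /\ (forall j, 0 <= X (idx j) j -> s j = 1)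
        /\ frob (X - XOmega R idx *m diag_mx (\row_(j < r) s j))
             <= 12%:R * (dmin lam r)^-1 * eps).
Proof.
have hg2 := frob2_le_frob hgrad.
have he2 := sqr_ge0 eps.
split.
  apply: frob_le_frob2; first by rewrite mulr_ge0 ?ler0n ?ltW.
  apply: le_trans (frob2_rayleigh_sub_LamOmega hSt hidx) _.
  by rewrite exprMn -natrX; lra.
move=> hid; have hd := dmin_gt0 hr1 hstrict.
have hgap (j : 'I_r) (n : 'I_N) : n != idx j -> dmin lam r <= `|lam (idx j) - lam n|.
  move=> hn; rewrite hid; apply: (dmin_le_dist hdec) => //.
  by rewrite -(hid j) (inj_eq val_inj).
exists (fun j => pmsign (X (idx j) j)); split; [|split].
- by move=> j; rewrite /pmsign; case: ifP => _; [left | right].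
- by move=> j; rewrite /pmsign => ->.
apply: frob_le_frob2; first by rewrite !mulr_ge0 ?ler0n ?invr_ge0 ?ltW.
apply: sqr_le_div => //.
apply: le_trans (frob2_signed_selection_le hSt (ltW hd) hidx hgap) _.
by rewrite exprMn -natrX; lra.
Qed.
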